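(* Let $\rho\in(0,1)$, $\xi\in\mathbb{R}$, and $H=\frac{1}{2(1-\rho\cos x)}\big(\sin^2x\,(P_x^2+P_y^2)+\xi\big)$ on $(x,y)\in(0,\pi)\times\mathbb{R}$. On a level set $H=E\neq0$, $P_y=L>0$, set $\sigma=\frac1\rho\big(\frac{\xi}{2E}-1\big)$ and $\eta=\frac{\rho E}{L^2}$. If $\eta>0$ and $-1<\sigma<1$, the projection to the $(x,y)$-plane of a trajectory of the Hamiltonian flow on this level set, normalized by a translation in $y$ so that $y=0$ at $x=x_*$, has equation $$\cosh y=\frac{\eta-\cos x}{\sqrt{\eta^2+2\sigma\eta+1}},\qquad x\in(x_*,\pi),$$ where $\cos x_*=\eta-\sqrt{\eta^2+2\sigma\eta+1}$. *)

From Stdlib Require Import Reals.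
From Coquelicot Require Import Coquelicot.
Open Scope R_scope.

Definition Ham (rho xi : R) (x y px py : R) : R :=
  (sin x ^ 2 * (px ^ 2 + py ^ 2) + xi) / (2 * (1 - rho * cos x)).

Definition ham_traj (rho xi : R) (a b : Rbar) (X Y PX PY : R -> R) : Prop :=
  forall t : R, Rbar_lt a t -> Rbar_lt t b ->
    0 < X t < PI /\
    is_derive X t (Derive (fun p => Ham rho xi (X t) (Y t) p (PY t)) (PX t)) /\
    is_derive Y t (Derive (fun p => Ham rho xi (X t) (Y t) (PX t) p) (PY t)) /\
    is_derive PX t (- Derive (fun q => Ham rho xi q (Y t) (PX t) (PY t)) (X t)) /\
    is_derive PY t (- Derive (fun q => Ham rho xi (X t) q (PX t) (PY t)) (Y t)).

Definition sigma_of (rho xi E : R) : R := / rho * (xi / (2 * E) - 1).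
Definition eta_of (rho E L : R) : R := rho * E / L ^ 2.


From Stdlib Require Import Reals Lra.
From Coquelicot Require Import Coquelicot.
Open Scope R_scope.

(* On the level set, u := (eta - cos x) / D and v := sin x P_x / (L D) satisfy
   u^2 - v^2 = 1, and Hamilton's equations give u' = v y' and v' = u y'.  Hence
   (u + v) e^(-y) is a first integral, so that u + v = k e^y for a constant
   k > 0, and then u = ((u + v) + (u + v)^-1) / 2 = cosh (y + ln k).  Finally
   u >= 1 means cos x <= eta - D = cos x_*. *)

Lemma one_sub_rho_cos_pos (rho x : R) : 0 < rho < 1 -> 0 < 1 - rho * cos x.
Proof. intros Hrho; pose proof (COS_bound x); nra. Qed.

Lemma Derive_Ham_px (rho xi x y px py : R) : 0 < rho < 1 ->
  Derive (fun p => Ham rho xi x y p py) px = sin x ^ 2 * px / (1 - rho * cos x).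
Proof.
intros Hrho; pose proof (one_sub_rho_cos_pos rho x Hrho).
apply is_derive_unique; unfold Ham; auto_derive; [lra | field; lra].
Qed.

Lemma Derive_Ham_py (rho xi x y px py : R) : 0 < rho < 1 ->
  Derive (fun p => Ham rho xi x y px p) py = sin x ^ 2 * py / (1 - rho * cos x).
Proof.
intros Hrho; pose proof (one_sub_rho_cos_pos rho x Hrho).
apply is_derive_unique; unfold Ham; auto_derive; [lra | field; lra].
Qed.

Lemma Derive_Ham_x (rho xi x y px py : R) : 0 < rho < 1 ->
  Derive (fun q => Ham rho xi q y px py) x =
  (sin x * cos x * (px ^ 2 + py ^ 2) * (1 - rho * cos x)
   - rho * sin x * (sin x ^ 2 * (px ^ 2 + py ^ 2) + xi) / 2) / (1 - rho * cos x) ^ 2.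
Proof.
intros Hrho; pose proof (one_sub_rho_cos_pos rho x Hrho).
apply is_derive_unique; unfold Ham; auto_derive; [lra | field; lra].
Qed.

Definition cosh_coord (eta D x : R) : R := (eta - cos x) / D.
Definition sinh_coord (L D x p : R) : R := sin x * p / (L * D).

Lemma Rbar_lt_exists_R (a b : Rbar) : Rbar_lt a b -> exists t : R, Rbar_lt a t /\ Rbar_lt t b.
Proof.
destruct a as [a| |], b as [b| |]; cbn [Rbar_lt]; try tauto; intros Hab.
- exists ((a + b) / 2); lra.
- exists (a + 1); split; [lra | exact I].
- exists (b - 1); split; [exact I | lra].
- exists 0; split; exact I.
Qed.

Lemma Rbar_interval_between (a b : Rbar) (t1 t2 x : R) :
  Rbar_lt a t1 -> Rbar_lt t1 b -> Rbar_lt a t2 -> Rbar_lt t2 b ->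
  Rmin t1 t2 <= x <= Rmax t1 t2 -> Rbar_lt a x /\ Rbar_lt x b.
Proof.
intros Ha1 Hb1 Ha2 Hb2 [Hmin Hmax]; split.
- apply Rbar_lt_le_trans with (Rmin t1 t2); [now apply Rmin_case | exact Hmin].
- apply Rbar_le_lt_trans with (Rmax t1 t2); [exact Hmax | now apply Rmax_case].
Qed.

Lemma is_derive_0_constant (f : R -> R) (a b : Rbar) :
  (forall t : R, Rbar_lt a t -> Rbar_lt t b -> is_derive f t 0) ->
  forall t1 t2 : R, Rbar_lt a t1 -> Rbar_lt t1 b -> Rbar_lt a t2 -> Rbar_lt t2 b ->
  f t2 = f t1.
Proof.
intros Hf t1 t2 Ha1 Hb1 Ha2 Hb2.
destruct (MVT_gen f t1 t2 (fun _ => 0)) as [c [_ Hc]]; [| | lra].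
- intros x Hx.
  destruct (Rbar_interval_between a b t1 t2 x Ha1 Hb1 Ha2 Hb2 ltac:(lra)) as [Hax Hxb].
  now apply Hf.
- intros x Hx.
  destruct (Rbar_interval_between a b t1 t2 x Ha1 Hb1 Ha2 Hb2 Hx) as [Hax Hxb].
  apply derivable_continuous_pt; exists 0; apply is_derive_Reals; now apply Hf.
Qed.

Lemma is_derive_hyperbolic_invariant (u v y : R -> R) (t dy : R) :
  is_derive y t dy -> is_derive u t (v t * dy) -> is_derive v t (u t * dy) ->
  is_derive (fun s => (u s + v s) * exp (- y s)) t 0.
Proof.
intros Hy Hu Hv.
assert (H := is_derive_mult _ _ t _ _ (is_derive_plus _ _ t _ _ Hu Hv)
  (is_derive_comp exp (fun s => - y s) t _ _ (is_derive_exp _) (is_derive_opp _ t _ Hy))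
  Rmult_comm).
match type of H with is_derive _ _ ?d => replace 0 with d; [exact H |] end.
cbn -[exp]; ring.
Qed.

Lemma hyperbola_branch (u v : R) : u ^ 2 - v ^ 2 = 1 -> -1 < u -> 1 <= u /\ 0 < u + v.
Proof.
intros H Hu.
assert (Hu1 : 1 <= u).
{ destruct (Rle_lt_dec 1 u) as [Hle | Hlt]; [exact Hle |].
  assert (0 < (1 - u) * (1 + u)) by (apply Rmult_lt_0_compat; lra); nra. }
split; [exact Hu1 |].
destruct (Rlt_le_dec 0 (u + v)) as [Hlt | Hle]; [exact Hlt |].
assert ((u + v) * (u - v) <= 0) by (apply Rmult_le_0_r; lra); nra.
Qed.

Lemma cosh_ln_hyperbola (u v y : R) : u ^ 2 - v ^ 2 = 1 -> 0 < u + v ->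
  u = cosh (y + ln ((u + v) * exp (- y))).
Proof.
intros Huv Hpos.
rewrite ln_mult, ln_exp by (try apply exp_pos; lra).
replace (y + (ln (u + v) + - y)) with (ln (u + v)) by ring.
unfold cosh; rewrite exp_Ropp, exp_ln by lra.
apply (Rmult_eq_reg_l (2 * (u + v))); [field_simplify; nra | lra].
Qed.

Lemma acos_le (c x : R) : -1 <= c <= 1 -> 0 <= x <= PI -> cos x <= c -> acos c <= x.
Proof.
intros Hc Hx Hcos; destruct (Rle_lt_dec (acos c) x) as [Hle | Hlt]; [exact Hle |].
pose proof (acos_bound c).
pose proof (cos_decreasing_1 x (acos c) ltac:(lra) ltac:(lra) ltac:(lra) ltac:(lra) Hlt).
rewrite cos_acos in * by exact Hc; lra.
Qed.

Lemma is_derive_cosh_coord (eta D : R) (X : R -> R) (t dX : R) : D <> 0 ->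
  is_derive X t dX ->
  is_derive (fun s => cosh_coord eta D (X s)) t (sin (X t) * dX / D).
Proof.
intros HD HX; unfold cosh_coord; auto_derive.
- eexists; exact HX.
- replace (Derive (fun s => X s) t) with dX by (symmetry; now apply is_derive_unique).
  field; exact HD.
Qed.

Lemma is_derive_sinh_coord (L D : R) (X P : R -> R) (t dX dP : R) : L <> 0 -> D <> 0 ->
  is_derive X t dX -> is_derive P t dP ->
  is_derive (fun s => sinh_coord L D (X s) (P s)) t
    ((cos (X t) * dX * P t + sin (X t) * dP) / (L * D)).
Proof.
intros HL0 HD HX HP; unfold sinh_coord; auto_derive.
- split; [eexists; exact HX | split; [eexists; exact HP | exact I]].
- replace (Derive (fun s => X s) t) with dX by (symmetry; now apply is_derive_unique).
  replace (Derive (fun s => P s) t) with dP by (symmetry; now apply is_derive_unique).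
  field; split; assumption.
Qed.

Section LevelSet.

Variables (rho xi E L : R).
Hypotheses (Hrho : 0 < rho < 1) (HE : E <> 0) (HL : 0 < L)
  (Heta : 0 < eta_of rho E L) (Hsigma : -1 < sigma_of rho xi E < 1).

Let eta := eta_of rho E L.
Let sigma := sigma_of rho xi E.
Let D := sqrt (eta ^ 2 + 2 * sigma * eta + 1).

Lemma rhoE_eta : rho * E = eta * L ^ 2.
Proof. unfold eta, eta_of; field; lra. Qed.

Lemma xi_sigma : xi = 2 * E * (1 + rho * sigma).
Proof. unfold sigma, sigma_of; field; lra. Qed.

Lemma D_sq : D ^ 2 = eta ^ 2 + 2 * sigma * eta + 1.
Proof.
unfold D; rewrite <- Rsqr_pow2; apply Rsqr_sqrt.
pose proof (pow2_ge_0 (eta + sigma)); fold eta sigma in Heta, Hsigma; nra.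
Qed.

Lemma D_pos : 0 < D.
Proof.
unfold D; apply sqrt_lt_R0.
pose proof (pow2_ge_0 (eta + sigma)); fold eta sigma in Heta, Hsigma; nra.
Qed.

Lemma eta_sub_D_bounds : -1 < eta - D < 1.
Proof. pose proof D_sq; pose proof D_pos; fold eta sigma in Heta, Hsigma; split; nra. Qed.

Lemma eta_add_D_gt_1 : 1 < eta + D.
Proof. pose proof D_sq; pose proof D_pos; fold eta sigma in Heta, Hsigma; nra. Qed.

Lemma level_energy (x y p : R) : Ham rho xi x y p L = E ->
  sin x ^ 2 * (p ^ 2 + L ^ 2) + xi = 2 * E * (1 - rho * cos x).
Proof.
pose proof (one_sub_rho_cos_pos rho x Hrho).
unfold Ham; intros <-; field; lra.
Qed.

Lemma level_set_hyperbola (x y p : R) : Ham rho xi x y p L = E ->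
  cosh_coord eta D x ^ 2 - sinh_coord L D x p ^ 2 = 1.
Proof.
intros Hlev; pose proof (level_energy x y p Hlev) as Hen.
pose proof D_pos.
assert (Hsin : sin x ^ 2 = 1 - cos x ^ 2)
  by (pose proof (sin2_cos2 x); rewrite <- !Rsqr_pow2; lra).
assert (Hp : (sin x * p) ^ 2 = L ^ 2 * ((eta - cos x) ^ 2 - D ^ 2)).
{ replace ((sin x * p) ^ 2) with (2 * E * (1 - rho * cos x) - xi - sin x ^ 2 * L ^ 2)
    by (rewrite <- Hen; ring).
  rewrite Hsin, xi_sigma, D_sq.
  transitivity (- 2 * (rho * E) * (cos x + sigma) - L ^ 2 + cos x ^ 2 * L ^ 2); [ring |].
  rewrite rhoE_eta; ring. }
unfold cosh_coord, sinh_coord.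
replace ((sin x * p / (L * D)) ^ 2) with ((sin x * p) ^ 2 / (L ^ 2 * D ^ 2)) by (field; lra).
rewrite Hp; field; lra.
Qed.

Lemma level_flow_identities (x y p : R) : Ham rho xi x y p L = E ->
  let dX := Derive (fun q => Ham rho xi x y q L) p in
  let dY := Derive (fun q => Ham rho xi x y p q) L in
  let dP := - Derive (fun q => Ham rho xi q y p L) x in
  sin x * dX / D = sinh_coord L D x p * dY /\
  (cos x * dX * p + sin x * dP) / (L * D) = cosh_coord eta D x * dY.
Proof.
intros Hlev dX dY dP; unfold dX, dY, dP.
pose proof (level_energy x y p Hlev) as Hen.
pose proof (one_sub_rho_cos_pos rho x Hrho); pose proof D_pos.
assert (HEeta : E = eta * L ^ 2 / rho)
  by (apply (Rmult_eq_reg_l rho); [rewrite rhoE_eta; field |]; lra).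
rewrite Derive_Ham_px, Derive_Ham_py, Derive_Ham_x by exact Hrho.
unfold cosh_coord, sinh_coord; rewrite Hen, HEeta; split; field; lra.
Qed.

Variables (a b : Rbar) (X Y PX PY : R -> R).
Hypotheses (Htraj : ham_traj rho xi a b X Y PX PY)
  (Hlevel : forall t : R, Rbar_lt a t -> Rbar_lt t b ->
     Ham rho xi (X t) (Y t) (PX t) (PY t) = E /\ PY t = L).

Lemma traj_level (t : R) : Rbar_lt a t -> Rbar_lt t b ->
  Ham rho xi (X t) (Y t) (PX t) L = E.
Proof. intros Hat Htb; destruct (Hlevel t Hat Htb) as [Hlev HPY]; now rewrite <- HPY. Qed.

Lemma traj_branch (t : R) : Rbar_lt a t -> Rbar_lt t b ->
  1 <= cosh_coord eta D (X t) /\ 0 < cosh_coord eta D (X t) + sinh_coord L D (X t) (PX t).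
Proof.
intros Hat Htb; apply hyperbola_branch.
- exact (level_set_hyperbola _ _ _ (traj_level t Hat Htb)).
- pose proof D_pos; pose proof eta_add_D_gt_1; pose proof (COS_bound (X t)).
  unfold cosh_coord; apply (Rmult_lt_reg_r D); [lra |].
  field_simplify; lra.
Qed.

Lemma traj_invariant (t : R) : Rbar_lt a t -> Rbar_lt t b ->
  is_derive (fun s => (cosh_coord eta D (X s) + sinh_coord L D (X s) (PX s)) * exp (- Y s)) t 0.
Proof.
intros Hat Htb.
destruct (Hlevel t Hat Htb) as [_ HPY].
destruct (Htraj t Hat Htb) as [_ [HX [HY [HP _]]]].
rewrite HPY in HX, HY, HP.
destruct (level_flow_identities _ _ _ (traj_level t Hat Htb)) as [Hc Hs].
pose proof D_pos.
apply is_derive_hyperbolic_invariant with (1 := HY).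
- rewrite <- Hc; apply is_derive_cosh_coord; [lra | exact HX].
- rewrite <- Hs; apply is_derive_sinh_coord; [lra | lra | exact HX | exact HP].
Qed.

Lemma traj_cos_le (t : R) : Rbar_lt a t -> Rbar_lt t b -> cos (X t) <= eta - D.
Proof.
intros Hat Htb; destruct (traj_branch t Hat Htb) as [Hge1 _].
pose proof D_pos; unfold cosh_coord in Hge1.
apply (Rmult_le_compat_r D) in Hge1; [| lra].
replace ((eta - cos (X t)) / D * D) with (eta - cos (X t)) in Hge1 by (field; lra); lra.
Qed.

End LevelSet.

Theorem proposition4 (rho xi E L : R) (a b : Rbar) (X Y PX PY : R -> R) :
  0 < rho < 1 ->
  E <> 0 ->
  0 < L ->
  Rbar_lt a b ->
  ham_traj rho xi a b X Y PX PY ->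
  (forall t : R, Rbar_lt a t -> Rbar_lt t b ->
     Ham rho xi (X t) (Y t) (PX t) (PY t) = E /\ PY t = L) ->
  0 < eta_of rho E L ->
  -1 < sigma_of rho xi E < 1 ->
  let eta := eta_of rho E L in
  let sigma := sigma_of rho xi E in
  let D := sqrt (eta ^ 2 + 2 * sigma * eta + 1) in
  exists xstar : R, 0 < xstar < PI /\ cos xstar = eta - D /\
  exists y0 : R, forall t : R, Rbar_lt a t -> Rbar_lt t b ->
    xstar <= X t /\ cosh (Y t - y0) = (eta - cos (X t)) / D.
Proof.
intros Hrho HE HL Hab Htraj Hlevel Heta Hsigma eta sigma D.
assert (HetaD : -1 < eta - D < 1) by (eapply eta_sub_D_bounds; eauto).
set (K := fun s => (cosh_coord eta D (X s) + sinh_coord L D (X s) (PX s)) * exp (- Y s)).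
destruct (Rbar_lt_exists_R a b Hab) as [t0 [Hat0 Ht0b]].
exists (acos (eta - D)); split; [now apply acos_bound_lt |].
split; [apply cos_acos; lra |].
exists (- ln (K t0)); intros t Hat Htb; split.
- destruct (Htraj t Hat Htb) as [HXt _].
  apply acos_le; [lra | lra |].
  eapply traj_cos_le; eauto.
- assert (HK : K t0 = K t).
  { apply (is_derive_0_constant K a b); auto; intros s Has Hsb.
    eapply traj_invariant; eauto. }
  assert (Hlev := traj_level rho xi E L a b X Y PX PY Hlevel t Hat Htb).
  rewrite HK; replace (Y t - - ln (K t)) with (Y t + ln (K t)) by ring.
  symmetry; apply cosh_ln_hyperbola.
  + eapply level_set_hyperbola; eauto.
  + eapply proj2, traj_branch; eauto.
Qed.
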